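(* Let $\Phi:B(H_{in})\to B(H_{out})$ be a quantum channel. Let $V=\mathrm{Range}\big((\mathrm{id}\otimes\pi_{op})(C_\Phi)\big)\subseteq H_{in}\otimes\overline{H_{out}}$, where $(\mathrm{id}\otimes\pi_{op})(C_\Phi)$ is regarded as a linear operator on $H_{in}\otimes\overline{H_{out}}$. Then, under the Hilbert space identification $B(H_{in})\otimes B(\overline{H_{out}})\cong (H_{in}\otimes\overline{H_{out}})\otimes(\overline{H_{in}}\otimes H_{out})$ given by $\theta_{\xi,\eta}\otimes\theta_{\overline{\zeta},\overline{\omega}}\mapsto(\xi\otimes\overline{\zeta})\otimes(\overline{\eta}\otimes\omega)$, one has $$(\mathrm{id}\otimes\pi_{op})(\tilde S_\Phi)\cong V\otimes\overline{V}.$$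
   Context: All Hilbert spaces are finite dimensional; inner products are linear in the second variable. $\theta_{\xi,\eta}(\eta')=\langle\eta,\eta'\rangle\xi$. A quantum channel is a trace-preserving completely positive map. $O=B(H_{out})$, and $O^{op}$ is its opposite algebra (product $a*b=ba$). $\overline{H}$ is the conjugate Hilbert space, $\xi\mapsto\overline{\xi}$ the antilinear identification; $\pi_{op}:O^{op}\to B(\overline{H_{out}})$ is the faithful representation $\pi_{op}(T)\overline{\xi}=\overline{T^*\xi}$. Let $\{e_i\}$ be an orthonormal basis of $H_{in}$ and $e_{ij}$ the matrix units. $C_\Phi=\sum_{i,j}e_{ij}\otimes\Phi(e_{ji})\in B(H_{in})\otimes O^{op}$. $\mathcal{M}_\Phi=H_{in}\otimes O^{op}$ is the right Hilbert $O^{op}$-module with $(\xi\otimes a)*x=\xi\otimes(a*x)$ and $\langle\xi\otimes a,\eta\otimes b\rangle_{O^{op}}=\langle\xi,\eta\rangle a^**b$, so that $\mathcal{L}(\mathcal{M}_\Phi)\cong B(H_{in})\otimes O^{op}$ and $C_\Phi\in\mathcal{L}(\mathcal{M}_\Phi)$. A Stinespring module related to $\Phi$ is a pair $(\mathcal{E},W)$, $\mathcal{E}$ a Hilbert $O^{op}$-module, $W$ an adjointable module map $\mathcal{M}_\Phi\to\mathcal{E}$ with $W^*W=C_\Phi$. The quantum confusability multigraph is $\tilde S_\Phi=W^*\mathcal{L}(\mathcal{E})W\subseteq B(H_{in})\otimes O^{op}$ (independent of the choice of Stinespring module). *)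

From HB Require Import structures.
From mathcomp Require Import all_boot all_order all_algebra.
Set Implicit Arguments. Unset Strict Implicit. Unset Printing Implicit Defensive.
Import Order.TTheory GRing.Theory Num.Theory.
Local Open Scope ring_scope.

(* The complex numbers are an arbitrary numClosedFieldType C
   (e.g. algC, or complex R).  H_in = C^n with orthonormal basis e_i,
   H_out = C^m with orthonormal basis f_k; operators are matrices in these
   bases; O = B(H_out) = 'M[C]_m. *)

Section Defs.
Variable C : numClosedFieldType.

Definition adjmx (p q : nat) (A : 'M[C]_(p, q)) : 'M[C]_(q, p) :=
  (map_mx (@Num.conj C) A)^T.

Definition psd (N : nat) (X : 'M[C]_N) : Prop :=
  forall v : 'cV[C]_N, 0 <= (adjmx v *m X *m v) 0 0.

(* splitting a flattened index of 'I_(p*q) (H_1 (x) H_2, basis u_i (x) w_k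
   with flattening mxvec_index) into its pair of indices *)
Definition pidx (p q : nat) (r : 'I_(p * q)) : 'I_p * 'I_q :=
  enum_val (cast_ord (esym (mxvec_cast p q)) r).

(* the ampliation id_k (x) Phi acting on B(C^k (x) H_in) = 'M_(k*n) *)
Definition ampl (n m k : nat) (Phi : 'M[C]_n -> 'M[C]_m) (X : 'M[C]_(k * n))
  : 'M[C]_(k * m) :=
  \matrix_(r, s)
    (Phi (\matrix_(i, j) X (mxvec_index (pidx r).1 i) (mxvec_index (pidx s).1 j)))
      (pidx r).2 (pidx s).2.

Definition completely_positive (n m : nat) (Phi : 'M[C]_n -> 'M[C]_m) : Prop :=
  forall (k : nat) (X : 'M[C]_(k * n)), psd X -> psd (@ampl n m k Phi X).

Definition trace_preserving (n m : nat) (Phi : 'M[C]_n -> 'M[C]_m) : Prop :=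
  forall X : 'M[C]_n, \tr (Phi X) = \tr X.

Definition quantum_channel (n m : nat) (Phi : {linear 'M[C]_n -> 'M[C]_m}) : Prop :=
  completely_positive Phi /\ trace_preserving Phi.

(* product of the opposite algebra O^op : a * b = b a *)
Definition opmul (m : nat) (a b : 'M[C]_m) : 'M[C]_m := b *m a.

(* (pre-)Hilbert right O^op-module: complex vector space with a right
   O^op-action and an O^op-valued inner product, linear in the 2nd variable *)
Record HilbModOp (m : nat) := HilbModOpMk {
  hm_car :> lmodType C;
  hm_act : hm_car -> 'M[C]_m -> hm_car;
  hm_ip  : hm_car -> hm_car -> 'M[C]_m;
  hm_act_addl : forall a x y, hm_act (x + y) a = hm_act x a + hm_act y a;
  hm_act_scalel : forall a (l : C) x, hm_act (l *: x) a = l *: hm_act x a;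
  hm_act_addr : forall x a b, hm_act x (a + b) = hm_act x a + hm_act x b;
  hm_act_scaler : forall x (l : C) a, hm_act x (l *: a) = l *: hm_act x a;
  hm_act1 : forall x, hm_act x 1%:M = x;
  hm_actM : forall x a b, hm_act x (opmul a b) = hm_act (hm_act x a) b;
  hm_ip_addr : forall x y z, hm_ip x (y + z) = hm_ip x y + hm_ip x z;
  hm_ip_scaler : forall x (l : C) y, hm_ip x (l *: y) = l *: hm_ip x y;
  hm_ip_act : forall x y a, hm_ip x (hm_act y a) = opmul (hm_ip x y) a;
  hm_ip_adj : forall x y, hm_ip y x = adjmx (hm_ip x y);
  hm_ip_pos : forall x, psd (hm_ip x x);
  hm_ip_def : forall x, hm_ip x x = 0 -> x = 0
}.

Definition adjointable (m : nat) (E : HilbModOp m) (T : E -> E) : Prop :=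
  exists T' : E -> E, forall x y, hm_ip (T x) y = hm_ip x (T' y).

(* M_Phi = H_in (x) O^op : sum_i e_i (x) a_i is stored as (a_i)_i *)
Definition MPhi (n m : nat) := {ffun 'I_n -> 'M[C]_m}.

(* <sum e_i (x) a_i, sum e_j (x) b_j> = sum_i a_i^* * b_i  (product of O^op) *)
Definition ipM (n m : nat) (x y : MPhi n m) : 'M[C]_m :=
  \sum_i opmul (adjmx (x i)) (y i).

(* an element of B(H_in) (x) O^op, sum_{i,j} e_ij (x) c i j *)
Definition BT (n m : nat) := 'I_n -> 'I_n -> 'M[C]_m.

(* its action on M_Phi: (e_ij (x) c)(e_j (x) a) = e_i (x) (c * a) *)
Definition bt_act (n m : nat) (c : BT n m) (x : MPhi n m) : MPhi n m :=
  [ffun i => \sum_j opmul (c i j) (x j)].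

(* C_Phi = sum_{i,j} e_ij (x) Phi(e_ji) *)
Definition CPhi (n m : nat) (Phi : 'M[C]_n -> 'M[C]_m) : BT n m :=
  fun i j => Phi (delta_mx j i).

(* Stinespring module related to Phi: W : M_Phi -> E adjointable with
   adjoint Wadj, and W^* W = C_Phi *)
Definition stinespring (n m : nat) (Phi : 'M[C]_n -> 'M[C]_m) (E : HilbModOp m)
  (W : MPhi n m -> E) (Wadj : E -> MPhi n m) : Prop :=
  (forall x y, hm_ip (W x) y = ipM x (Wadj y)) /\
  (forall x, Wadj (W x) = bt_act (CPhi Phi) x).

(* c lies in the quantum confusability multigraph W^* L(E) W *)
Definition in_Stilde (n m : nat) (E : HilbModOp m) (W : MPhi n m -> E)
  (Wadj : E -> MPhi n m) (c : BT n m) : Prop :=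
  exists T : E -> E, adjointable T /\ forall x, Wadj (T (W x)) = bt_act c x.

(* coordinates (in the basis fbar_k) of the conjugate vector vbar *)
Definition barv (N : nat) (v : 'cV[C]_N) : 'cV[C]_N := map_mx (@Num.conj C) v.

(* pi_op(T) on conj(H_out): pi_op(T) xibar = conj(T^* xi); its matrix in the
   basis fbar_l has column l = coordinates of conj(T^* f_l) *)
Definition pi_op (m : nat) (T : 'M[C]_m) : 'M[C]_m :=
  \matrix_(k, l) (barv (adjmx T *m delta_mx l (0 : 'I_1))) k 0.

(* (id (x) pi_op)(c) as an operator on H_in (x) conj(H_out),
   matrix in the basis e_i (x) fbar_k (flattened with mxvec_index) *)
Definition idpi (n m : nat) (c : BT n m) : 'M[C]_(n * m) :=
  \matrix_(r, s) pi_op (c (pidx r).1 (pidx s).1) (pidx r).2 (pidx s).2.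

(* The identification B(H_in) (x) B(conj H_out) = (H_in (x) conj H_out) (x)
   (conj H_in (x) H_out), theta_{xi,eta} (x) theta_{zetabar,omegabar} |->
   (xi (x) zetabar) (x) (etabar (x) omega).  An element of the right-hand side
   is recorded by its coefficient array t r s w.r.t. the basis
   (e_i (x) fbar_k) (x) (ebar_j (x) f_l), r = (i,k), s = (j,l).  Since
   e_ij (x) e_kl |-> (e_i (x) fbar_k) (x) (ebar_j (x) f_l), the coefficient array
   of the image of X is the matrix of X. *)
Definition tensor_ident (N : nat) (X : 'M[C]_N) : 'M[C]_N := \matrix_(r, s) X r s.

(* coefficient array of v (x) wbar in (K) (x) (conj K), where wbar is given by
   its coordinates in the conjugate basis *)
Definition etens (N : nat) (v wbar : 'cV[C]_N) : 'M[C]_N :=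
  \matrix_(r, s) (v r 0 * wbar s 0).

Definition inV (n m : nat) (Phi : 'M[C]_n -> 'M[C]_m) (v : 'cV[C]_(n * m)) : Prop :=
  exists u : 'cV[C]_(n * m), v = idpi (CPhi Phi) *m u.

Definition in_VVbar (n m : nat) (Phi : 'M[C]_n -> 'M[C]_m) (t : 'M[C]_(n * m)) : Prop :=
  exists (K : nat) (vs ws : 'I_K -> 'cV[C]_(n * m)),
    (forall k, inV Phi (vs k) /\ inV Phi (ws k)) /\
    t = \sum_(k < K) etens (vs k) (barv (ws k)).

End Defs.

From HB Require Import structures.
From mathcomp Require Import all_boot all_order all_algebra.
Set Implicit Arguments. Unset Strict Implicit. Unset Printing Implicit Defensive.
Import Order.TTheory GRing.Theory Num.Theory.
Local Open Scope ring_scope.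

(* Under id (x) pi_op, C_Phi becomes a matrix P with range V, and V (x) Vbar
   becomes the set of matrices P Z P.  Since C_Phi = W^* W, P is self-adjoint
   and W vanishes on ker P.  Hence W^* T W kills ker P and has range in
   (ker P)^perp = V, so it is of the form P Z P; conversely P Z P = W^* T W
   for T = W Z W^*. *)

Lemma mulmx_sum_col_row (R : pzSemiRingType) p q r
    (A : 'M[R]_(p, q)) (B : 'M[R]_(q, r)) :
  A *m B = \sum_k col k A *m row k B.
Proof.
apply/matrixP => i j; rewrite !mxE summxE.
by apply: eq_bigr => k _; rewrite !mxE big_ord1 !mxE.
Qed.

Section Sandwich.
Variable F : fieldType.

Lemma submx_of_ker p q r (Y : 'M[F]_(p, q)) (P : 'M[F]_(r, q)) :
  (forall u : 'cV_q, P *m u = 0 -> Y *m u = 0) -> (Y <= P)%MS.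
Proof.
move=> kerY; rewrite submxE; apply/eqP/matrixP => i j.
have /matrixP/(_ i 0) : Y *m col j (cokermx P) = 0.
  by apply: kerY; rewrite colE mulmxA mulmx_coker mul0mx.
by rewrite colE mulmxA -colE !mxE.
Qed.

Lemma sandwich_of_ker N (P Y : 'M[F]_N) :
  (forall u : 'cV_N, P *m u = 0 -> Y *m u = 0) ->
  (forall u : 'rV_N, u *m P = 0 -> u *m Y = 0) ->
  exists Z, Y = P *m Z *m P.
Proof.
move=> /submx_of_ker sYP lkerY.
have /submxP [A /(congr1 trmx)] : (Y^T <= P^T)%MS.
  apply: submx_of_ker => u /(congr1 trmx); rewrite trmx_mul trmxK trmx0 => /lkerY.
  by move/(congr1 trmx); rewrite trmx_mul trmxK trmx0.
rewrite trmx_mul !trmxK => YA.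
by exists (A^T *m pinvmx P); rewrite mulmxA -YA mulmxKpV.
Qed.

End Sandwich.

Section Adjoint.
Variable C : numClosedFieldType.

Lemma adjmxE p q (A : 'M[C]_(p, q)) i j : adjmx A i j = (A j i)^*.
Proof. by rewrite !mxE. Qed.

Lemma adjmx0 p q : adjmx (0 : 'M[C]_(p, q)) = 0.
Proof. by rewrite /adjmx map_mx0 trmx0. Qed.

Lemma adjmxM p q r (A : 'M[C]_(p, q)) (B : 'M[C]_(q, r)) :
  adjmx (A *m B) = adjmx B *m adjmx A.
Proof. by rewrite /adjmx map_mxM trmx_mul. Qed.

Lemma adjmxK p q : cancel (@adjmx C p q) (@adjmx C q p).
Proof. by move=> A; rewrite /adjmx map_trmx trmxK map_mxCK. Qed.

Lemma adjmx_delta N (a : 'I_N) : adjmx (delta_mx a 0) = delta_mx 0 a :> 'M[C]_(1, N).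
Proof.
apply/matrixP => i j; rewrite !ord1 !mxE !eqxx andbT /=.
by case: (_ == _); rewrite ?rmorph1 ?rmorph0.
Qed.

Lemma adjmx_delta_mulmx N (M : 'M[C]_N) (a b : 'I_N) :
  (adjmx (delta_mx a 0 : 'cV_N) *m (M *m delta_mx b (0 : 'I_1))) 0 0 = M a b.
Proof. by rewrite adjmx_delta mulmxA -rowE -colE !mxE. Qed.

Lemma etens_barv N (v w : 'cV[C]_N) : etens v (barv w) = v *m adjmx w.
Proof. by apply/matrixP => r s; rewrite !mxE big_ord1 !mxE. Qed.

End Adjoint.

Section HilbertModule.
Variables (C : numClosedFieldType) (m : nat) (E : HilbModOp C m).

Lemma hm_ip0r (x : E) : hm_ip x 0 = 0.
Proof. by have := hm_ip_scaler x 0 0; rewrite !scale0r. Qed.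

Lemma hm_ip0l (x : E) : hm_ip 0 x = 0.
Proof. by rewrite hm_ip_adj hm_ip0r adjmx0. Qed.

Lemma adjointable0 (T : E -> E) : adjointable T -> T 0 = 0.
Proof. by case=> T' adjT; apply: hm_ip_def; rewrite adjT hm_ip0l. Qed.

End HilbertModule.

Section Coordinates.
Variables (C : numClosedFieldType) (n m : nat).

Lemma pidxK p q (i : 'I_p) (j : 'I_q) : pidx (mxvec_index i j) = (i, j).
Proof. by rewrite /pidx /mxvec_index cast_ordK enum_rankK. Qed.

Lemma pidxKV p q (r : 'I_(p * q)) : mxvec_index (pidx r).1 (pidx r).2 = r.
Proof. by rewrite /pidx /mxvec_index -surjective_pairing enum_valK cast_ordKV. Qed.

Lemma sum_pidx (R : nmodType) p q (G : 'I_p -> 'I_q -> R) :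
  \sum_(r : 'I_(p * q)) G (pidx r).1 (pidx r).2 = \sum_i \sum_j G i j.
Proof.
rewrite (reindex _ (curry_mxvec_bij p q)) /= pair_bigA /=.
by apply: eq_bigr => -[i j] _ /=; rewrite pidxK.
Qed.

Lemma pi_opE (T : 'M[C]_m) k l : pi_op T k l = T l k.
Proof.
rewrite /pi_op /barv !mxE (bigD1 l) //= big1 => [|a /negbTE al].
  by rewrite !mxE !eqxx mulr1 addr0 conjCK.
by rewrite !mxE al mulr0.
Qed.

Lemma idpiE (c : BT C n m) r s :
  idpi c r s = c (pidx r).1 (pidx s).1 (pidx s).2 (pidx r).2.
Proof. by rewrite /idpi mxE pi_opE. Qed.

Definition unidpi (M : 'M[C]_(n * m)) : BT C n m :=
  fun i j => \matrix_(l, k) M (mxvec_index i k) (mxvec_index j l).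

Lemma unidpiK : cancel unidpi (@idpi C n m).
Proof. by move=> M; apply/matrixP => r s; rewrite idpiE mxE !pidxKV. Qed.

Lemma tensor_identE N (X : 'M[C]_N) : tensor_ident X = X.
Proof. by apply/matrixP => r s; rewrite mxE. Qed.

Definition slice (p : 'I_m) (x : MPhi C n m) : 'cV[C]_(n * m) :=
  \col_r x (pidx r).1 p (pidx r).2.

Definition unslice (q : 'I_m) (u : 'cV[C]_(n * m)) : MPhi C n m :=
  [ffun i => \matrix_(a, l) if a == q then u (mxvec_index i l) 0 else 0].

Lemma slice_unslice p q u : slice p (unslice q u) = if p == q then u else 0.
Proof.
apply/matrixP => r z; rewrite ord1 !mxE ffunE mxE pidxKV.
by case: (p == q); rewrite ?mxE.
Qed.

Lemma slice_inj x y : (forall p, slice p x = slice p y) -> x = y.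
Proof.
move=> eq_xy; apply/ffunP => i; apply/matrixP => a l.
by have /matrixP/(_ (mxvec_index i l) 0) := eq_xy a; rewrite !mxE pidxK.
Qed.

Lemma slice_bt_act c x p : slice p (bt_act c x) = idpi c *m slice p x.
Proof.
apply/matrixP => r z; rewrite ord1 !mxE ffunE summxE.
under [RHS]eq_bigr do rewrite idpiE !mxE.
rewrite (sum_pidx (fun j l => c (pidx r).1 j l (pidx r).2 * x j p l)).
by apply: eq_bigr => j _; rewrite mxE; apply: eq_bigr => l _; rewrite mulrC.
Qed.

Lemma ipM_slice x y p q : ipM x y p q = (adjmx (slice q x) *m slice p y) 0 0.
Proof.
rewrite summxE mxE; under [RHS]eq_bigr do rewrite !mxE.
rewrite (sum_pidx (fun j l => (x j q l)^* * y j p l)).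
by apply: eq_bigr => j _; rewrite mxE; apply: eq_bigr => l _; rewrite !mxE mulrC.
Qed.

Lemma slice0 p : slice p 0 = 0.
Proof. by apply/matrixP => r z; rewrite !mxE ffunE mxE. Qed.

Lemma unslice0 q : unslice q 0 = 0.
Proof. by apply/ffunP => i; apply/matrixP => a l; rewrite !ffunE !mxE; case: eqP. Qed.

Lemma ipM0r (x : MPhi C n m) : ipM x 0 = 0.
Proof. by rewrite /ipM big1 // => i _; rewrite ffunE /opmul mul0mx. Qed.

Lemma ipM0l (x : MPhi C n m) : ipM 0 x = 0.
Proof. by rewrite /ipM big1 // => i _; rewrite ffunE adjmx0 /opmul mulmx0. Qed.

Lemma bt_act0 (c : BT C n m) : bt_act c 0 = 0.
Proof.
apply/ffunP => i; rewrite !ffunE big1 // => j _.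
by rewrite ffunE /opmul mul0mx.
Qed.

Lemma ipM_adj (x y : MPhi C n m) : ipM x y = adjmx (ipM y x).
Proof.
apply/matrixP => p q; rewrite adjmxE !ipM_slice -adjmxE.
by rewrite adjmxM adjmxK.
Qed.

Lemma bt_act_unslice c q u : bt_act c (unslice q u) = unslice q (idpi c *m u).
Proof.
apply: slice_inj => p; rewrite slice_bt_act !slice_unslice.
by case: eqP; rewrite ?mulmx0.
Qed.

Lemma bt_actM c d x :
  bt_act c (bt_act d x) = bt_act (unidpi (idpi c *m idpi d)) x.
Proof. by apply: slice_inj => p; rewrite !slice_bt_act unidpiK mulmxA. Qed.

Lemma ipM_bt_act c x y :
  ipM (bt_act c x) y = ipM x (bt_act (unidpi (adjmx (idpi c))) y).
Proof.
by apply/matrixP => p q; rewrite !ipM_slice !slice_bt_act unidpiK adjmxM mulmxA.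
Qed.

Lemma idpi_adj_of_sym (c : BT C n m) :
  (forall x y, ipM (bt_act c x) y = ipM x (bt_act c y)) ->
  adjmx (idpi c) = idpi c.
Proof.
move=> sym_c; apply/matrixP => a b; set p := (pidx a).2.
have /matrixP/(_ p p) := sym_c (unslice p (delta_mx a 0)) (unslice p (delta_mx b 0)).
rewrite !ipM_slice !slice_bt_act !slice_unslice eqxx.
by rewrite adjmxM -mulmxA !adjmx_delta_mulmx.
Qed.

End Coordinates.

Section Stinespring.
Variables (C : numClosedFieldType) (n m : nat) (Phi : 'M[C]_n -> 'M[C]_m).
Variables (E : HilbModOp C m) (W : MPhi C n m -> E) (Wadj : E -> MPhi C n m).
Hypothesis stW : stinespring Phi W Wadj.
Local Notation P := (idpi (CPhi Phi)).

Let ipW : forall x y, hm_ip (W x) y = ipM x (Wadj y) := stW.1.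
Let Wadj_W : forall x, Wadj (W x) = bt_act (CPhi Phi) x := stW.2.

Lemma stinespring_W0 : W 0 = 0.
Proof. by apply: hm_ip_def; rewrite ipW ipM0l. Qed.

Lemma stinespring_Wadj0 : Wadj 0 = 0.
Proof. by rewrite -stinespring_W0 Wadj_W bt_act0. Qed.

Lemma stinespring_ker q u : P *m u = 0 -> W (unslice q u) = 0.
Proof.
move=> Pu; apply: hm_ip_def.
by rewrite ipW Wadj_W bt_act_unslice Pu unslice0 ipM0r.
Qed.

Lemma stinespring_perp p (u : 'cV[C]_(n * m)) e :
  P *m u = 0 -> adjmx u *m slice p (Wadj e) = 0.
Proof.
move=> Pu; have /matrixP/(_ p p) := ipW (unslice p u) e.
rewrite stinespring_ker // hm_ip0l ipM_slice slice_unslice eqxx mxE => h.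
by apply/matrixP => i j; rewrite !ord1 -h mxE.
Qed.

Lemma stinespring_adj : adjmx P = P.
Proof.
apply: idpi_adj_of_sym => x y.
by rewrite ipM_adj -!Wadj_W -!ipW -hm_ip_adj.
Qed.

Lemma Stilde_sandwich c : in_Stilde W Wadj c -> exists Z, idpi c = P *m Z *m P.
Proof.
case=> T [adjT WTW].
have Y_slice p v : idpi c *m v = slice p (Wadj (T (W (unslice p v)))).
  by rewrite WTW slice_bt_act slice_unslice eqxx.
apply: sandwich_of_ker => [u Pu | u uP].
  apply/matrixP => r z; rewrite (Y_slice (pidx r).2) stinespring_ker //.
  by rewrite (adjointable0 adjT) stinespring_Wadj0 slice0.
have Pu : P *m adjmx u = 0 by rewrite -stinespring_adj -adjmxM uP adjmx0.
apply/matrixP => i j; set e := T (W (unslice (pidx j).2 (delta_mx j 0))).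
have /matrixP/(_ 0 0) := stinespring_perp (pidx j).2 e Pu.
by rewrite adjmxK -Y_slice mulmxA -colE !ord1 !mxE.
Qed.

Lemma sandwich_Stilde Z : in_Stilde W Wadj (unidpi (P *m Z *m P)).
Proof.
exists (fun e => W (bt_act (unidpi Z) (Wadj e))); split.
  exists (fun e => W (bt_act (unidpi (adjmx Z)) (Wadj e))) => x y.
  by rewrite ipW ipM_bt_act unidpiK hm_ip_adj ipW -ipM_adj.
by move=> x; rewrite !Wadj_W !bt_actM !unidpiK.
Qed.

End Stinespring.

Section RangeTensor.
Variables (C : numClosedFieldType) (n m : nat) (Phi : 'M[C]_n -> 'M[C]_m).
Local Notation P := (idpi (CPhi Phi)).
Hypothesis Padj : adjmx P = P.

Lemma inV_pinv v : inV Phi v -> v = P *m (pinvmx P *m v).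
Proof. by case=> u ->; rewrite [pinvmx P *m _]mulmxA 2!mulmxA mulmxKpV. Qed.

Lemma in_VVbar_sandwich t : in_VVbar Phi t <-> exists Z, t = P *m Z *m P.
Proof.
split => [[K [vs [ws [Vvw ->]]]] | [Z ->]].
  exists (\sum_k (pinvmx P *m vs k) *m adjmx (pinvmx P *m ws k)).
  rewrite mulmx_sumr mulmx_suml; apply: eq_bigr => k _.
  rewrite etens_barv {1}(inV_pinv (Vvw k).1) {1}(inV_pinv (Vvw k).2).
  by rewrite adjmxM Padj !mulmxA.
exists (n * m)%N, (fun b => P *m (Z *m delta_mx b 0)), (fun b => P *m delta_mx b 0).
split=> [b | ]; first by split; [exists (Z *m delta_mx b 0) | exists (delta_mx b 0)].
rewrite (mulmx_sum_col_row (P *m Z) P); apply: eq_bigr => b _.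
by rewrite etens_barv adjmxM Padj adjmx_delta -rowE colE mulmxA.
Qed.

End RangeTensor.

(* Complete positivity and trace preservation only serve to produce a
   Stinespring module, which is given here. *)
Theorem proposition3p19 (C : numClosedFieldType) (n m : nat)
  (Phi : {linear 'M[C]_n -> 'M[C]_m}) (E : HilbModOp C m)
  (W : MPhi C n m -> E) (Wadj : E -> MPhi C n m) :
  quantum_channel Phi ->
  stinespring Phi W Wadj ->
  forall t : 'M[C]_(n * m),
    (exists c : BT C n m, in_Stilde W Wadj c /\ t = tensor_ident (idpi c))
    <-> in_VVbar Phi t.
Proof.
move=> _ stW t; have Padj := stinespring_adj stW.
split=> [[c [Sc ->]] | /(in_VVbar_sandwich Padj) [Z ->]].
  by apply/(in_VVbar_sandwich Padj); rewrite tensor_identE; apply: Stilde_sandwich Sc.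
exists (unidpi (idpi (CPhi Phi) *m Z *m idpi (CPhi Phi))).
by rewrite unidpiK tensor_identE; split; first exact: sandwich_Stilde.
Qed.
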